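(* Let $G$ be a finite simple graph with at least one edge, and let $R(G)$ be its regularization. Then $$\frac{|V(R(G))|}{\mathrm{es}_{\Delta}(R(G))}\leq \frac{|V(G)|}{\mathrm{es}_{\Delta}(G)}.$$
   Context: $\mathrm{es}_{\Delta}(H)$ is the minimum number of edges of $H$ whose removal results in a subgraph with maximum degree $\Delta(H)-1$. $\mathrm{core}(H)$ is the set of vertices of maximum degree in $H$. The regularization $R(G)$ is defined as follows. If $G$ is regular, $R(G)=G$. Otherwise, let $A_G=V(G)\setminus\mathrm{core}(G)$, and let $G^{(1)}$ be obtained from two disjoint copies $G'$ and $G''$ of $G$ by adding an edge between each vertex of $A_{G'}$ and its corresponding copy in $A_{G''}$ (so $\Delta(G^{(1)})=\Delta(G)$ and $\delta(G^{(1)})=\delta(G)+1$). Iterating this construction, $G^{(i+1)}=(G^{(i)})^{(1)}$, and $R(G)=G^{(\Delta(G)-\delta(G))}$, which is $\Delta(G)$-regular. *)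

From mathcomp Require Import all_boot all_order all_algebra.
Set Implicit Arguments. Unset Strict Implicit. Unset Printing Implicit Defensive.

(* A graph on a finite vertex type T is given by an adjacency relation e.
   A finite simple graph: e symmetric and irreflexive. *)

Definition deg (T : finType) (e : rel T) (x : T) : nat := #|[set y | e x y]|.

Definition maxdeg (T : finType) (e : rel T) : nat := \max_(x : T) deg e x.

(* minimum degree delta(G) (maxdeg used as neutral element; all degrees are
   <= maxdeg, so this is the minimum when T is nonempty) *)
Definition mindeg (T : finType) (e : rel T) : nat :=
  \big[minn/maxdeg e]_(x : T) deg e x.

Definition core (T : finType) (e : rel T) : {set T} :=
  [set x | deg e x == maxdeg e].

Definition edges (T : finType) (e : rel T) : {set {set T}} :=
  [set [set x; y] | x in T, y in T & e x y].

Definition remove_edges (T : finType) (e : rel T) (F : {set {set T}}) : rel T :=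
  fun x y => e x y && ([set x; y] \notin F).

Definition es_ok (T : finType) (e : rel T) (F : {set {set T}}) : bool :=
  (F \subset edges e) && (maxdeg (remove_edges e F) == (maxdeg e).-1).

Definition esDelta (T : finType) (e : rel T) : nat :=
  \big[minn/#|edges e|]_(F : {set {set T}} | es_ok e F) #|F|.

(* graphs packaged with their vertex type, to allow iteration *)
Definition graphT := {T : finType & rel T}.
Definition gV (G : graphT) : finType := projT1 G.
Definition gE (G : graphT) : rel (gV G) := projT2 G.

(* G^(1): two disjoint copies G' = V x {false}, G'' = V x {true}, plus an edge
   between each vertex of A_G = V \ core(G) and its copy. *)
Definition double_rel (T : finType) (e : rel T) : rel (T * bool)%type :=
  fun u v =>
    ((u.2 == v.2) && e u.1 v.1) ||
    [&& u.1 == v.1, u.2 != v.2 & u.1 \notin core e].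

Definition double (G : graphT) : graphT :=
  existT (fun T : finType => rel T) (gV G * bool)%type (double_rel (@gE G)).

Definition regularization (T : finType) (e : rel T) : graphT :=
  iter (maxdeg e - mindeg e) double (existT (fun T : finType => rel T) T e).

From Pilot Require Import Defs.
From HB Require Import structures.
From mathcomp Require Import all_boot all_order all_algebra.
From mathcomp Require Import zify.
Import GRing.Theory Num.Theory.

Set Implicit Arguments.
Unset Strict Implicit.
Unset Printing Implicit Defensive.

(** Doubling G into G^(1) doubles the number of vertices and at least doubles
  es_Delta; iterating gives the inequality for R(G).  For the second point,
  let F be a set of edges of G^(1) whose removal brings the maximum degree
  down to Delta(G) - 1.  A vertex of core(G) has all its neighbours in its own
  copy, so in each copy the edges of F lying there already bring the maximum
  degree of G down to Delta(G) - 1.  Since removing a single edge lowers the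
  maximum degree by at most one, such a set of edges has at least es_Delta(G)
  elements, and the two copies contribute disjoint parts of F. *)

HB.instance Definition _ := SemiGroup.isComLaw.Build nat minn minnA minnC.

Lemma bigmin_leq (I : finType) (P : pred I) (F : I -> nat) d j :
  P j -> \big[minn/d]_(i | P i) F i <= F j.
Proof. by move=> Pj; rewrite (bigD1 j) //= geq_minl. Qed.

Lemma leq_bigmin (I : finType) (P : pred I) (F : I -> nat) d m :
  (forall i, P i -> m <= F i) -> m <= d -> m <= \big[minn/d]_(i | P i) F i.
Proof.
by move=> leF led; elim/big_ind: _ => // x y lex ley; rewrite leq_min lex ley.
Qed.

Section Degrees.
Variables (T : finType) (e : rel T).

Lemma leq_deg_maxdeg x : deg e x <= maxdeg e.
Proof. exact: (@leq_bigmax T (fun x => deg e x) x). Qed.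

Lemma maxdeg_leq n : (forall x, deg e x <= n) -> maxdeg e <= n.
Proof. by move=> le_n; apply/bigmax_leqP => x _. Qed.

Lemma edge_mem_edges x y : e x y -> [set x; y] \in edges e.
Proof. by move=> exy; apply/imset2P; exists x y; rewrite ?inE. Qed.

End Degrees.

Section RemoveEdges.
Variables (T : finType) (e : rel T).

Lemma deg_remove_edges_leq F x : deg (remove_edges e F) x <= deg e x.
Proof. by apply/subset_leq_card/subsetP => y; rewrite !inE => /andP[]. Qed.

Lemma maxdeg_remove_edges0 : maxdeg (remove_edges e set0) = maxdeg e.
Proof.
apply: eq_bigr => x _; apply: eq_card => y.
by rewrite !inE /remove_edges inE andbT.
Qed.

Lemma maxdeg_remove_all_edges : maxdeg (remove_edges e (edges e)) = 0.
Proof.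
apply/eqP; rewrite -leqn0; apply: maxdeg_leq => x.
rewrite leqn0 cards_eq0; apply/eqP/setP => y; rewrite !inE /remove_edges.
by case: (boolP (e x y)) => // /edge_mem_edges ->.
Qed.

Lemma set2_injr (x y1 y2 : T) : [set x; y1] = [set x; y2] -> y1 = y2.
Proof.
move=> eq_set2; have : y1 \in [set x; y2] by rewrite -eq_set2 !inE eqxx orbT.
rewrite !inE => /orP [/eqP y1x|/eqP //]; subst y1.
have : y2 \in [set x; x] by rewrite eq_set2 !inE eqxx orbT.
by rewrite !inE orbb => /eqP.
Qed.

Lemma deg_remove_edgesD1 F f x :
  deg (remove_edges e (F :\ f)) x <= (deg (remove_edges e F) x).+1.
Proof.
have sub_N : [set y | remove_edges e (F :\ f) x y] \subset
    [set y | remove_edges e F x y] :|: [set y | [set x; y] == f].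
  apply/subsetP => y; rewrite !inE /remove_edges !inE negb_and negbK.
  by case: (e x y) => //= /orP [->|->]; rewrite ?orbT.
apply: (leq_trans (subset_leq_card sub_N)); apply: (leq_trans (leq_card_setU _ _)).
rewrite -addn1 leq_add2l; apply/card_le1_eqP => y1 y2; rewrite !inE.
by move=> /eqP f1 /eqP f2; apply: (@set2_injr x); rewrite f1 f2.
Qed.

Lemma maxdeg_remove_edgesD1 F f :
  maxdeg (remove_edges e (F :\ f)) <= (maxdeg (remove_edges e F)).+1.
Proof.
apply: maxdeg_leq => x; apply: (leq_trans (deg_remove_edgesD1 F f x)).
exact: leq_deg_maxdeg.
Qed.

End RemoveEdges.

Section EsDelta.
Variables (T : finType) (e : rel T).

(* Put the edges of F back one at a time: the maximum degree climbs by steps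
   of at most one up to Delta, so it passes through Delta - 1. *)
Lemma esDelta_leq (F : {set {set T}}) : F \subset edges e ->
  maxdeg (remove_edges e F) <= (maxdeg e).-1 -> esDelta e <= #|F|.
Proof.
move: {2}#|F| (leqnn #|F|) => n; elim: n F => [|n IH] F leFn sub_F le_max.
  move: leFn; rewrite leqn0 cards_eq0 => /eqP F0; subst F.
  apply: bigmin_leq; rewrite /es_ok sub0set /=.
  by move: le_max; rewrite maxdeg_remove_edges0; lia.
have [eq_max|ne_max] := eqVneq (maxdeg (remove_edges e F)) (maxdeg e).-1.
  by apply: bigmin_leq; rewrite /es_ok sub_F eq_max /=.
have lt_max : maxdeg (remove_edges e F) < (maxdeg e).-1.
  by rewrite ltn_neqAle ne_max le_max.
have [F0|[f Ff]] := set_0Vmem F.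
  by move: lt_max; rewrite F0 maxdeg_remove_edges0; lia.
have card_F := cardsD1 f F; rewrite Ff /= in card_F.
have le_es : esDelta e <= #|F :\ f|.
  apply: IH; first by move: leFn; rewrite card_F.
    exact: subset_trans (subsetDl F [set f]) sub_F.
  exact: leq_trans (maxdeg_remove_edgesD1 e F f) lt_max.
by rewrite card_F; apply: leq_trans le_es (leq_addl _ _).
Qed.

Lemma leq_esDelta m :
    (forall F, maxdeg (remove_edges e F) <= (maxdeg e).-1 -> m <= #|F|) ->
  m <= esDelta e.
Proof.
move=> le_m; apply: leq_bigmin => [F /andP [_ /eqP eq_max]|].
  by apply: le_m; rewrite eq_max.
by apply: le_m; rewrite maxdeg_remove_all_edges.
Qed.

Lemma esDelta_gt0 x y : e x y -> 0 < esDelta e.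
Proof.
move=> exy; apply: leq_esDelta => F; rewrite card_gt0.
have [->|[f Ff] _] := set_0Vmem F; last by apply/set0Pn; exists f.
have : 0 < deg e x by rewrite card_gt0; apply/set0Pn; exists y; rewrite inE.
by have := leq_deg_maxdeg e x; rewrite maxdeg_remove_edges0; lia.
Qed.

End EsDelta.

Section Doubling.
Variables (T : finType) (e : rel T).

Definition copy_edge (b : bool) (s : {set T}) : {set T * bool} :=
  [set (x, b) | x in s].

Lemma copy_edge_set2 b x y : copy_edge b [set x; y] = [set (x, b); (y, b)].
Proof. by rewrite /copy_edge imsetU1 imset_set1. Qed.

Lemma pair_injl (b : bool) : injective (fun x : T => (x, b)).
Proof. by move=> x1 x2 [->]. Qed.

Lemma copy_edge_inj b : injective (copy_edge b).
Proof. exact: imset_inj (@pair_injl b). Qed.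

Lemma deg_double_rel x b :
  deg (double_rel e) (x, b) <= deg e x + (x \notin core e).
Proof.
have sub_N : [set v | double_rel e (x, b) v] \subset
    [set (y, b) | y in [set y | e x y]]
    :|: (if x \in core e then set0 else [set (x, ~~ b)]).
  apply/subsetP => -[y c]; rewrite inE /double_rel /=.
  case/orP => [/andP [/eqP <- exy]|/and3P [/eqP <- ne_bc ncore]].
    by rewrite in_setU imset_f ?inE.
  rewrite in_setU (negbTE ncore) in_set1.
  by case: b c ne_bc => -[] //= _; rewrite eqxx orbT.
apply: (leq_trans (subset_leq_card sub_N)); apply: (leq_trans (leq_card_setU _ _)).
apply: leq_add; first exact: leq_imset_card.
by case: (x \in core e); rewrite ?cards0 ?cards1.
Qed.

Lemma maxdeg_double_rel : maxdeg (double_rel e) <= maxdeg e.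
Proof.
apply: maxdeg_leq => -[x b]; apply: (leq_trans (deg_double_rel x b)).
have := leq_deg_maxdeg e x; rewrite /core inE.
by case: eqP => /= [->|]; lia.
Qed.

Definition edges_in_copy (F : {set {set T * bool}}) b : {set {set T}} :=
  [set s in edges e | copy_edge b s \in F].

Lemma deg_remove_edges_in_copy F b x :
  deg (remove_edges e (edges_in_copy F b)) x
    <= deg (remove_edges (double_rel e) F) (x, b).
Proof.
rewrite /deg -(card_imset _ (@pair_injl b)).
apply/subset_leq_card/subsetP => _ /imsetP [y + ->].
rewrite !inE /remove_edges /double_rel /= eqxx => /andP [exy].
by rewrite exy inE negb_and edge_mem_edges // copy_edge_set2.
Qed.

Lemma maxdeg_remove_edges_in_copy F b :
    maxdeg (remove_edges (double_rel e) F) <= (maxdeg e).-1 ->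
  maxdeg (remove_edges e (edges_in_copy F b)) <= (maxdeg e).-1.
Proof.
move=> le_max; apply: maxdeg_leq => x.
have [x_core|x_ncore] := boolP (x \in core e).
  apply: leq_trans (deg_remove_edges_in_copy F b x) _.
  exact: leq_trans (leq_deg_maxdeg _ _) le_max.
apply: leq_trans (deg_remove_edges_leq _ _ _) _.
by have := leq_deg_maxdeg e x; move: x_ncore; rewrite inE; lia.
Qed.

Lemma card_edges_in_copy F :
  #|edges_in_copy F false| + #|edges_in_copy F true| <= #|F|.
Proof.
rewrite -(card_imset _ (@copy_edge_inj false)) -(card_imset _ (@copy_edge_inj true)).
rewrite -cardsUI.
have -> : copy_edge false @: edges_in_copy F false
          :&: copy_edge true @: edges_in_copy F true = set0.
  apply/setP => s; rewrite !inE; apply/negP => /andP [/imsetP [s1 + ->]].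
  rewrite inE => /andP [/imset2P [x y _ _ ->] _] /imsetP [s2 _].
  move/setP/(_ (x, false)); rewrite copy_edge_set2 !inE eqxx /=.
  by move/esym/imsetP => [z _ []].
rewrite cards0 addn0; apply/subset_leq_card/subsetP => s.
by rewrite inE => /orP [] /imsetP [s1]; rewrite inE => /andP [_ Fs1] ->.
Qed.

Lemma esDelta_double_rel : 2 * esDelta e <= esDelta (double_rel e).
Proof.
apply: leq_esDelta => F le_max.
have {}le_max : maxdeg (remove_edges (double_rel e) F) <= (maxdeg e).-1.
  by apply: leq_trans le_max _; have := maxdeg_double_rel; lia.
have le_es b : esDelta e <= #|edges_in_copy F b|.
  apply: esDelta_leq; last exact: maxdeg_remove_edges_in_copy.
  by apply/subsetP => s; rewrite inE => /andP [].
rewrite mul2n -addnn; apply: leq_trans (card_edges_in_copy F).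
exact: leq_add (le_es false) (le_es true).
Qed.

End Doubling.

Lemma card_iter_double (G : graphT) k :
  #|gV (iter k Defs.double G)| = 2 ^ k * #|gV G|.
Proof.
elim: k => [|k IH] /=; first by rewrite mul1n.
by rewrite card_prod IH card_bool expnS mulnC mulnA.
Qed.

Lemma esDelta_iter_double (G : graphT) k :
  2 ^ k * esDelta (@gE G) <= esDelta (@gE (iter k Defs.double G)).
Proof.
elim: k => [|k IH] /=; first by rewrite mul1n.
rewrite expnS -mulnA; apply: leq_trans (esDelta_double_rel _).
by rewrite leq_mul2l IH orbT.
Qed.

Local Open Scope ring_scope.

Theorem lemma3p1 (T : finType) (e : rel T)
  (e_sym : symmetric e) (e_irr : irreflexive e)
  (e_edge : exists x y, e x y) :
  let RG := regularization e in
  (#|gV RG|%:R / (esDelta (@gE RG))%:R : rat)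
    <= #|T|%:R / (esDelta e)%:R.
Proof.
cbv zeta; set RG := regularization e; set k := (maxdeg e - mindeg e)%N.
have card_RG : #|gV RG| = (2 ^ k * #|T|)%N := card_iter_double _ k.
have es_RG : (2 ^ k * esDelta e <= esDelta (@gE RG))%N := esDelta_iter_double _ k.
have [x [y exy]] := e_edge.
have es_gt0 := esDelta_gt0 exy.
have es_RG_gt0 : (0 < esDelta (@gE RG))%N.
  by apply: leq_trans es_RG; rewrite muln_gt0 expn_gt0 es_gt0.
rewrite card_RG ler_pdivrMr ?ltr0n // mulrAC ler_pdivlMr ?ltr0n //.
by rewrite -!natrM ler_nat -mulnA mulnCA leq_mul2l es_RG orbT.
Qed.
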